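(* Let $\mathcal{T}:\mathrm{Cvx}(\mathbb{R}^n)\to\mathrm{Cvx}(\mathbb{R}^n)$ satisfy: (1) $\phi\le\psi$ iff $\mathcal{T}\phi\le\mathcal{T}\psi$; (2) $\mathcal{T}\phi=\phi$ for every positively homogeneous $\phi\in\mathrm{Cvx}(\mathbb{R}^n)$; (3) whenever $\phi',\psi'\in\mathrm{Im}\,\mathcal{T}$ and $\phi'+\psi'$ is finite at some point, $\phi'+\psi'\in\mathrm{Im}\,\mathcal{T}$. Then: (a) for every $a\in\mathbb{R}^n$ and $c\in\mathbb{R}$ there exist $b\in\mathbb{R}^n$ and $d\in\mathbb{R}$ with $\mathcal{T}\delta_{a,c}=\delta_{b,d}$; (b) for every affine function $\ell$ and every $\phi\in\mathrm{Cvx}(\mathbb{R}^n)$, $\ell$ is tangent to $\phi$ if and only if $\mathcal{T}\ell$ is tangent to $\mathcal{T}\phi$.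
   Context: $\mathrm{Cvx}(\mathbb{R}^n)$ denotes the set of functions $\phi:\mathbb{R}^n\to(-\infty,\infty]$ that are convex, lower semicontinuous, and finite at at least one point; $\mathrm{Im}\,\mathcal{T}=\{\mathcal{T}\phi:\phi\in\mathrm{Cvx}(\mathbb{R}^n)\}$. Positively homogeneous means $\phi(\lambda x)=\lambda\phi(x)$ for all $x$ and $\lambda>0$. For $a\in\mathbb{R}^n$, $c\in\mathbb{R}$, $\delta_{a,c}(x)=c$ if $x=a$ and $+\infty$ otherwise. An affine function $\ell$ is tangent to $\phi$ if $\ell\le\phi$ but $\ell+\epsilon\not\le\phi$ for every $\epsilon>0$. (Affine functions belong to $\mathrm{Cvx}(\mathbb{R}^n)$, and $\mathcal{T}$ maps affine functions to affine functions.) *)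

From Stdlib Require Import Reals Lra Classical ClassicalEpsilon FunctionalExtensionality.
From Stdlib Require Fin.
Open Scope R_scope.

Definition Vec (n : nat) := Fin.t n -> R.

Definition vadd {n} (x y : Vec n) : Vec n := fun i => x i + y i.
Definition vscal {n} (t : R) (x : Vec n) : Vec n := fun i => t * x i.

Fixpoint dot (n : nat) : Vec n -> Vec n -> R :=
  match n return Vec n -> Vec n -> R with
  | O => fun _ _ => 0
  | S m => fun x y => x Fin.F1 * y Fin.F1
                      + dot m (fun i => x (Fin.FS i)) (fun i => y (Fin.FS i))
  end.

Inductive ER := Fin (r : R) | PInf.

Definition ERle (a b : ER) : Prop :=
  match a, b with
  | Fin x, Fin y => x <= y
  | _, PInf => True
  | PInf, Fin _ => False
  end.

Definition ERadd (a b : ER) : ER :=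
  match a, b with
  | Fin x, Fin y => Fin (x + y)
  | _, _ => PInf
  end.

(** multiplication by a strictly positive scalar *)
Definition ERscal (t : R) (a : ER) : ER :=
  match a with Fin x => Fin (t * x) | PInf => PInf end.

Definition efun (n : nat) := Vec n -> ER.

Definition fle {n} (f g : efun n) : Prop := forall x, ERle (f x) (g x).

(** convexity: the epigraph is convex *)
Definition convex {n} (f : efun n) : Prop :=
  forall (x y : Vec n) (a b t : R), 0 <= t <= 1 ->
    ERle (f x) (Fin a) -> ERle (f y) (Fin b) ->
    ERle (f (vadd (vscal t x) (vscal (1 - t) y))) (Fin (t * a + (1 - t) * b)).

Definition lsc {n} (f : efun n) : Prop :=
  forall (x : Vec n) (r : R), ~ ERle (f x) (Fin r) ->
    exists delta, delta > 0 /\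
      forall y : Vec n, (forall i, Rabs (y i - x i) < delta) ->
        ~ ERle (f y) (Fin r).

Definition proper {n} (f : efun n) : Prop := exists x, f x <> PInf.

Definition Cvx {n} (f : efun n) : Prop := convex f /\ lsc f /\ proper f.

Definition pos_homogeneous {n} (f : efun n) : Prop :=
  forall (x : Vec n) (lam : R), lam > 0 -> f (vscal lam x) = ERscal lam (f x).

Definition InIm {n} (T : efun n -> efun n) (g : efun n) : Prop :=
  exists phi, Cvx phi /\ T phi = g.

Definition delta {n} (a : Vec n) (c : R) : efun n :=
  fun x => if excluded_middle_informative (x = a) then Fin c else PInf.

Definition affine {n} (l : efun n) : Prop :=
  exists (u : Vec n) (beta : R), forall x, l x = Fin (dot n u x + beta).

Definition tangent {n} (l phi : efun n) : Prop :=
  fle l phi /\ forall eps, eps > 0 -> ~ fle (fun x => ERadd (l x) (Fin eps)) phi.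

From Stdlib Require Import Reals Lra Classical ClassicalEpsilon FunctionalExtensionality.
From Stdlib Require Fin.
Open Scope R_scope.

(** In positive dimension we show that such a transform [T] is a rescaling: for some
    [C > 0], [T phi (C x) = C phi(x)] for every [phi] and [x] ([T_scaling]).  Both claims
    follow at once: [T (delta a c) = delta (C a) (C c)], and tangency is invariant under
    rescaling both functions ([tangent_scale]).  In dimension zero a function is its
    value at the single point, tangency is equality, and an order embedding is injective.

    For [a <> 0] and a covector [k] with [<k, a> = 1]:
    [T (delta a c)] equals [c <k, .>] on its domain ([Tdelta_linear]), since images of
    deltas at [a] are only dominated by images of deltas at [a]; this domain lies on the
    open ray of [a], does not depend on [c], and carries [T (cst 1)] as the coordinate
    along the ray; comparing [a] with [2 a] reduces it to a single point [lam a]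
    ([Tdelta_nonzero]).  Then [T] is known at [lam a] on all of Cvx ([T_scales_at]);
    [T (cst 1) + T (cst (-1)) = 0] makes [T (cst 1)] a constant, equal to every [lam]
    ([Tdelta_nonzero_scale]), and the origin is settled by convexity ([T_delta]). *)

Lemma between_comb p q r : p < q < r ->
  exists t, 0 < t < 1 /\ q = t * p + (1 - t) * r.
Proof.
  intros Hq. set (t := (r - q) / (r - p)).
  assert (Ht : t * (r - p) = r - q) by (unfold t; field; lra).
  exists t. split; [split|]; nra.
Qed.

Lemma scaled_lower_threshold C c r : 0 < C ->
  (forall e, e <= c <-> C * e <= r) -> r = C * c.
Proof.
  intros HC H.
  assert (Hc : C * c <= r) by (apply H; lra).
  assert (Hr : r / C <= c) by (apply H; right; field; lra).
  apply (Rmult_le_compat_l C) in Hr; [|lra].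
  replace (C * (r / C)) with r in Hr by (field; lra). lra.
Qed.

Lemma scaled_upper_threshold C v w : 0 < C ->
  (forall c, ERle v (Fin c) <-> ERle w (Fin (C * c))) -> w = ERscal C v.
Proof.
  intros HC H. destruct v as [r|], w as [s|]; simpl in *.
  - assert (Hs : s <= C * r) by (apply H; lra).
    assert (Hr : r <= s / C) by (apply H; right; field; lra).
    apply (Rmult_le_compat_l C) in Hr; [|lra].
    replace (C * (s / C)) with s in Hr by (field; lra). f_equal. lra.
  - exfalso. apply (proj1 (H r)). lra.
  - exfalso. apply (proj2 (H (s / C))). right. field. lra.
  - reflexivity.
Qed.

Definition vzero (n : nat) : Vec n := fun _ => 0.

Lemma dot_add_l n : forall (u v x : Vec n), dot n (vadd u v) x = dot n u x + dot n v x.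
Proof.
  induction n as [|n IH]; intros u v x; simpl; [ring|].
  unfold vadd in *. rewrite IH. ring.
Qed.

Lemma dot_scal_l n : forall t (u x : Vec n), dot n (vscal t u) x = t * dot n u x.
Proof.
  induction n as [|n IH]; intros t u x; simpl; [ring|].
  unfold vscal in *. rewrite IH. ring.
Qed.

Lemma dot_comm n : forall (u x : Vec n), dot n u x = dot n x u.
Proof. induction n as [|n IH]; intros u x; simpl; [ring|]. rewrite IH. ring. Qed.

Lemma dot_add_r n (u v x : Vec n) : dot n x (vadd u v) = dot n x u + dot n x v.
Proof. rewrite !(dot_comm n x). apply dot_add_l. Qed.

Lemma dot_scal_r n t (u x : Vec n) : dot n x (vscal t u) = t * dot n x u.
Proof. rewrite !(dot_comm n x). apply dot_scal_l. Qed.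

Lemma dot_comb n (k x y : Vec n) t :
  dot n k (vadd (vscal t x) (vscal (1 - t) y)) = t * dot n k x + (1 - t) * dot n k y.
Proof. rewrite dot_add_r, !dot_scal_r. ring. Qed.

Lemma dot_zero_l n : forall (u : Vec n), dot n (vzero n) u = 0.
Proof. induction n as [|n IH]; intros u; simpl; [ring|]. unfold vzero in *. rewrite IH. ring. Qed.

Lemma dot_self_nonneg n : forall (u : Vec n), 0 <= dot n u u.
Proof.
  induction n as [|n IH]; intros u; simpl; [lra|].
  specialize (IH (fun i => u (Fin.FS i))). nra.
Qed.

Lemma dot_self_zero n : forall (u : Vec n), dot n u u = 0 -> u = vzero n.
Proof.
  induction n as [|n IH]; intros u Hu; apply functional_extensionality; intro i.
  - exact (Fin.case0 (fun i => u i = vzero 0 i) i).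
  - simpl in Hu. pose proof (dot_self_nonneg n (fun i => u (Fin.FS i))) as Htail.
    assert (Hhead : u Fin.F1 = 0) by nra.
    assert (Hrest : (fun i => u (Fin.FS i)) = vzero n) by (apply IH; nra).
    apply (Fin.caseS' i (fun i => u i = vzero (S n) i)); [exact Hhead|].
    intro p. exact (f_equal (fun f => f p) Hrest).
Qed.

Lemma vscal_nonzero n t (x : Vec n) : t <> 0 -> x <> vzero n -> vscal t x <> vzero n.
Proof.
  intros Ht Hx E. apply Hx. apply functional_extensionality; intro i.
  apply (f_equal (fun f => f i)) in E. unfold vscal, vzero in *.
  destruct (Rmult_integral _ _ E); [contradiction | assumption].
Qed.

Lemma vscal_zero n t : vscal t (vzero n) = vzero n.
Proof. apply functional_extensionality; intro i. unfold vscal, vzero. ring. Qed.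

Lemma vscal_vscal n s t (x : Vec n) : vscal s (vscal t x) = vscal (s * t) x.
Proof. apply functional_extensionality; intro i. unfold vscal. ring. Qed.

Lemma vscal_comb n (a : Vec n) p q t :
  vadd (vscal t (vscal p a)) (vscal (1 - t) (vscal q a)) = vscal (t * p + (1 - t) * q) a.
Proof. apply functional_extensionality; intro i. unfold vadd, vscal. ring. Qed.

Definition dual_of {n} (a : Vec n) : Vec n := vscal (/ dot n a a) a.

Lemma dot_dual_of n (a : Vec n) : a <> vzero n -> dot n (dual_of a) a = 1.
Proof.
  intro Ha. unfold dual_of. rewrite dot_scal_l.
  assert (dot n a a <> 0) by (intro E; apply Ha, dot_self_zero, E).
  field. assumption.
Qed.

Lemma collinear_of_dual_invariant n (a y : Vec n) : a <> vzero n ->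
  (forall k, dot n k a = 1 -> dot n k y = dot n (dual_of a) y) ->
  y = vscal (dot n (dual_of a) y) a.
Proof.
  intros Ha Hinv. set (kap := dot n (dual_of a) y).
  set (w := vadd y (vscal (- kap) a)).
  assert (Hwa : dot n w a = 0).
  { assert (dot n a a <> 0) by (intro E; apply Ha, dot_self_zero, E).
    unfold w, kap, dual_of. rewrite dot_add_l, !dot_scal_l, (dot_comm n y a).
    field. assumption. }
  assert (Hwy : dot n w y = 0).
  { pose proof (Hinv (vadd (dual_of a) w)) as E.
    rewrite !dot_add_l, dot_dual_of, Hwa in E by exact Ha. fold kap in E. lra. }
  assert (Hw : w = vzero n).
  { apply dot_self_zero. unfold w at 2. rewrite dot_add_r, dot_scal_r, Hwy, Hwa. ring. }
  apply functional_extensionality; intro i. apply (f_equal (fun f => f i)) in Hw.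
  unfold w, vadd, vscal, vzero in Hw. unfold vscal. lra.
Qed.

Fixpoint l1norm (n : nat) : Vec n -> R :=
  match n return Vec n -> R with
  | O => fun _ => 0
  | S m => fun u => Rabs (u Fin.F1) + l1norm m (fun i => u (Fin.FS i))
  end.

Lemma l1norm_nonneg n : forall u, 0 <= l1norm n u.
Proof.
  induction n as [|n IH]; intro u; simpl; [lra|].
  pose proof (IH (fun i => u (Fin.FS i))). pose proof (Rabs_pos (u Fin.F1)). lra.
Qed.

Lemma dot_lipschitz n : forall (u x y : Vec n) d, (forall i, Rabs (y i - x i) <= d) ->
  dot n u x - l1norm n u * d <= dot n u y.
Proof.
  induction n as [|n IH]; intros u x y d H; simpl; [lra|].
  pose proof (IH (fun i => u (Fin.FS i)) (fun i => x (Fin.FS i)) (fun i => y (Fin.FS i)) d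
                 (fun i => H (Fin.FS i))).
  assert (Hhead : - (Rabs (u Fin.F1) * d) <= u Fin.F1 * (y Fin.F1 - x Fin.F1)).
  { assert (Habs : Rabs (u Fin.F1 * (y Fin.F1 - x Fin.F1)) <= Rabs (u Fin.F1) * d)
      by (rewrite Rabs_mult; apply Rmult_le_compat_l; [apply Rabs_pos | apply H]).
    pose proof (Rle_abs (- (u Fin.F1 * (y Fin.F1 - x Fin.F1)))) as Hneg.
    rewrite Rabs_Ropp in Hneg. lra. }
  lra.
Qed.

Lemma ERle_refl v : ERle v v.
Proof. destruct v; simpl; lra || trivial. Qed.

Lemma ERle_PInf_l v : ERle PInf v -> v = PInf.
Proof. destruct v; simpl; tauto. Qed.

Lemma Cvx_finite n (F : Vec n -> R) (L : R) : 0 <= L ->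
  (forall x y t, 0 <= t <= 1 ->
     F (vadd (vscal t x) (vscal (1 - t) y)) <= t * F x + (1 - t) * F y) ->
  (forall x y d, 0 <= d -> (forall i, Rabs (y i - x i) <= d) -> F x - L * d <= F y) ->
  Cvx (fun x => Fin (F x)).
Proof.
  intros HL Hconv Hlip. split; [|split].
  - intros x y a b t Ht Ha Hb; simpl in *. specialize (Hconv x y t Ht). nra.
  - intros x r Hr; simpl in Hr. set (delta0 := (F x - r) / (L + 1)).
    assert (Hd : 0 < delta0) by (apply Rdiv_lt_0_compat; lra).
    assert (Hgap : L * delta0 < F x - r).
    { replace (L * delta0) with ((F x - r) - delta0) by (unfold delta0; field; lra). lra. }
    exists delta0. split; [exact Hd|]. intros y Hy Hle; simpl in Hle.
    assert (F x - L * delta0 <= F y) by (apply Hlip; [lra | intro i; left; apply Hy]).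
    lra.
  - exists (vzero n). discriminate.
Qed.

Definition lin {n} (k : Vec n) : efun n := fun x => Fin (dot n k x).
Definition cst {n} (e : R) : efun n := fun _ => Fin e.
Definition lin_max {n} (k1 k2 : Vec n) : efun n :=
  fun x => Fin (Rmax (dot n k1 x) (dot n k2 x)).

Lemma Cvx_affine_fun n (u : Vec n) (b : R) : Cvx (fun x => Fin (dot n u x + b)).
Proof.
  apply (Cvx_finite n _ (l1norm n u)); [apply l1norm_nonneg| |].
  - intros x y t Ht. rewrite dot_comb. lra.
  - intros x y d _ Hd. pose proof (dot_lipschitz n u x y d Hd). lra.
Qed.

Lemma Cvx_affine n (l : efun n) : affine l -> Cvx l.
Proof.
  intros [u [b Hl]]. replace l with (fun x => Fin (dot n u x + b)).
  - apply Cvx_affine_fun.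
  - symmetry. apply functional_extensionality. exact Hl.
Qed.

Lemma Cvx_lin n (k : Vec n) : Cvx (lin k).
Proof.
  replace (lin k) with (fun x => Fin (dot n k x + 0)); [apply Cvx_affine_fun|].
  apply functional_extensionality; intro x. unfold lin. f_equal. ring.
Qed.

Lemma Cvx_cst n e : Cvx (@cst n e).
Proof.
  replace (@cst n e) with (fun x => Fin (dot n (vzero n) x + e)); [apply Cvx_affine_fun|].
  apply functional_extensionality; intro x. unfold cst. rewrite dot_zero_l. f_equal. ring.
Qed.

Lemma Cvx_lin_max n (k1 k2 : Vec n) : Cvx (lin_max k1 k2).
Proof.
  pose proof (l1norm_nonneg n k1); pose proof (l1norm_nonneg n k2).
  apply (Cvx_finite n _ (l1norm n k1 + l1norm n k2)); [lra| |].
  - intros x y t Ht. rewrite !dot_comb.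
    pose proof (Rmax_l (dot n k1 x) (dot n k2 x)). pose proof (Rmax_r (dot n k1 x) (dot n k2 x)).
    pose proof (Rmax_l (dot n k1 y) (dot n k2 y)). pose proof (Rmax_r (dot n k1 y) (dot n k2 y)).
    apply Rmax_lub; nra.
  - intros x y d Hd0 Hd.
    pose proof (dot_lipschitz n k1 x y d Hd). pose proof (dot_lipschitz n k2 x y d Hd).
    pose proof (Rmax_l (dot n k1 y) (dot n k2 y)). pose proof (Rmax_r (dot n k1 y) (dot n k2 y)).
    unfold Rmax at 1. destruct (Rle_dec (dot n k1 x) (dot n k2 x)); nra.
Qed.

Lemma homogeneous_lin n (k : Vec n) : pos_homogeneous (lin k).
Proof. intros x lam _. unfold lin. simpl. rewrite dot_scal_r. reflexivity. Qed.

Lemma homogeneous_lin_max n (k1 k2 : Vec n) : pos_homogeneous (lin_max k1 k2).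
Proof.
  intros x lam Hl. unfold lin_max. simpl. rewrite !dot_scal_r, RmaxRmult by lra. reflexivity.
Qed.

(** * The functions [delta a c] *)

Lemma delta_at n (a : Vec n) c : delta a c a = Fin c.
Proof. unfold delta. destruct (excluded_middle_informative (a = a)); congruence. Qed.

Lemma delta_off n (a : Vec n) c y : y <> a -> delta a c y = PInf.
Proof. intro H. unfold delta. destruct (excluded_middle_informative (y = a)); congruence. Qed.

Lemma neq_coord n (x a : Vec n) : x <> a -> exists i, x i <> a i.
Proof.
  intro H. apply NNPP. intro Hall. apply H. apply functional_extensionality. intro i.
  apply NNPP. intro Hi. apply Hall. exists i. exact Hi.
Qed.

Lemma Cvx_delta n (a : Vec n) c : Cvx (delta a c).
Proof.
  split; [|split].
  - intros x y p q t Ht Hx Hy.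
    destruct (excluded_middle_informative (x = a)) as [->|Hxa];
      [| rewrite delta_off in Hx by exact Hxa; contradiction].
    destruct (excluded_middle_informative (y = a)) as [->|Hya];
      [| rewrite delta_off in Hy by exact Hya; contradiction].
    replace (vadd (vscal t a) (vscal (1 - t) a)) with a
      by (apply functional_extensionality; intro i; unfold vadd, vscal; ring).
    rewrite delta_at in *. simpl in *. nra.
  - intros x r Hr. destruct (excluded_middle_informative (x = a)) as [->|Hxa].
    + rewrite delta_at in Hr. exists 1. split; [lra|]. intros y _.
      destruct (excluded_middle_informative (y = a)) as [->|Hya].
      * rewrite delta_at. exact Hr.
      * rewrite delta_off by exact Hya. simpl. tauto.
    + destruct (neq_coord n x a Hxa) as [i Hi].
      exists (Rabs (x i - a i)). split; [apply Rabs_pos_lt; lra|].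
      intros y Hy. specialize (Hy i).
      destruct (excluded_middle_informative (y = a)) as [->|Hya].
      * rewrite Rabs_minus_sym in Hy. lra.
      * rewrite delta_off by exact Hya. simpl. tauto.
  - exists a. rewrite delta_at. discriminate.
Qed.

Lemma homogeneous_delta_zero n : pos_homogeneous (delta (vzero n) 0).
Proof.
  intros x lam Hl. destruct (excluded_middle_informative (x = vzero n)) as [->|Hx].
  - rewrite vscal_zero, delta_at. simpl. f_equal. ring.
  - rewrite !delta_off; [reflexivity | exact Hx | apply vscal_nonzero; [lra | exact Hx]].
Qed.

Lemma fle_delta n (chi : efun n) a c : fle chi (delta a c) <-> ERle (chi a) (Fin c).
Proof.
  split.
  - intro H. specialize (H a). rewrite delta_at in H. exact H.
  - intros H y. destruct (excluded_middle_informative (y = a)) as [->|Hya].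
    + rewrite delta_at. exact H.
    + rewrite delta_off by exact Hya. destruct (chi y); simpl; trivial.
Qed.

Lemma delta_majorant n (a : Vec n) c phi : Cvx phi -> fle (delta a c) phi ->
  exists c', c <= c' /\ phi = delta a c'.
Proof.
  intros [_ [_ [x Hx]]] H.
  assert (Hoff : forall y, y <> a -> phi y = PInf).
  { intros y Hy. specialize (H y). rewrite delta_off in H by exact Hy. apply ERle_PInf_l, H. }
  destruct (phi a) as [c'|] eqn:E.
  - exists c'. split.
    + specialize (H a). rewrite delta_at, E in H. exact H.
    + apply functional_extensionality. intro y.
      destruct (excluded_middle_informative (y = a)) as [->|Hya].
      * rewrite delta_at. exact E.
      * rewrite delta_off by exact Hya. apply Hoff, Hya.
  - exfalso. destruct (excluded_middle_informative (x = a)) as [->|Hxa]; auto.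
Qed.

Lemma convex_at n (phi : efun n) x y a b t : convex phi -> 0 <= t <= 1 ->
  phi x = Fin a -> phi y = Fin b ->
  ERle (phi (vadd (vscal t x) (vscal (1 - t) y))) (Fin (t * a + (1 - t) * b)).
Proof. intros Hc Ht Ha Hb. apply Hc; [exact Ht | rewrite Ha | rewrite Hb]; apply ERle_refl. Qed.

Lemma convex_finite_between n (phi : efun n) a p q k r s : convex phi -> p <= k <= q ->
  phi (vscal p a) = Fin r -> phi (vscal q a) = Fin s -> exists v, phi (vscal k a) = Fin v.
Proof.
  intros Hc Hk Hp Hq. destruct (Req_dec p q) as [<-|Hpq].
  - replace k with p by lra. eauto.
  - set (t := (q - k) / (q - p)).
    assert (Ht : t * (q - p) = q - k) by (unfold t; field; lra).
    pose proof (convex_at n phi _ _ r s t Hc ltac:(nra) Hp Hq) as C.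
    rewrite vscal_comb in C. replace (t * p + (1 - t) * q) with k in C by nra.
    destruct (phi (vscal k a)); [eauto | contradiction].
Qed.

Lemma convex_ray_secant n (phi : efun n) a k1 k2 k v : convex phi -> k1 < k2 ->
  phi (vscal k1 a) = Fin k1 -> phi (vscal k2 a) = Fin k2 ->
  k < k1 \/ k2 < k -> phi (vscal k a) = Fin v -> k <= v.
Proof.
  intros Hc H12 E1 E2 [Hk|Hk] Ek.
  - destruct (between_comb k k1 k2 ltac:(lra)) as [t [Ht Ek1]].
    pose proof (convex_at n phi _ _ v k2 t Hc ltac:(lra) Ek E2) as C.
    rewrite vscal_comb, <- Ek1, E1 in C. simpl in C. nra.
  - destruct (between_comb k1 k2 k ltac:(lra)) as [t [Ht Ek2]].
    pose proof (convex_at n phi _ _ k1 v t Hc ltac:(lra) E1 Ek) as C.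
    rewrite vscal_comb, <- Ek2, E2 in C. simpl in C. nra.
Qed.

Lemma convex_const_off_origin n (phi : efun n) x0 e : convex phi -> x0 <> vzero n ->
  (forall x, x <> vzero n -> phi x = Fin e) -> phi (vzero n) = Fin e.
Proof.
  intros Hc Hx0 Hoff.
  assert (Hopp : vscal (-1) x0 <> vzero n) by (apply vscal_nonzero; [lra | exact Hx0]).
  assert (Hdbl : vscal 2 x0 <> vzero n) by (apply vscal_nonzero; [lra | exact Hx0]).
  pose proof (convex_at n phi _ _ e e (1/2) Hc ltac:(lra) (Hoff _ Hx0) (Hoff _ Hopp)) as C1.
  replace (vadd (vscal (1/2) x0) (vscal (1 - 1/2) (vscal (-1) x0))) with (vzero n) in C1
    by (apply functional_extensionality; intro i; unfold vadd, vscal, vzero; field).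
  destruct (phi (vzero n)) as [s|] eqn:Es; simpl in C1; [|contradiction].
  pose proof (convex_at n phi _ _ s e (1/2) Hc ltac:(lra) Es (Hoff _ Hdbl)) as C2.
  replace (vadd (vscal (1/2) (vzero n)) (vscal (1 - 1/2) (vscal 2 x0))) with x0 in C2
    by (apply functional_extensionality; intro i; unfold vadd, vscal, vzero; field).
  rewrite (Hoff _ Hx0) in C2. simpl in C2. f_equal. lra.
Qed.

Lemma concave_nonneg_const n (F : Vec n -> R) : (forall x, 0 <= F x) ->
  convex (fun x => Fin (- F x)) -> forall y, F y = F (vzero n).
Proof.
  intros Hpos Hc y.
  assert (Hconc : forall x z m, 0 < m ->
            (1 + m) * F (vadd (vscal (/ (1 + m)) x) (vscal (1 - / (1 + m)) z))
            >= F x + m * F z).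
  { intros x z m Hm.
    assert (Ht : 0 <= / (1 + m) <= 1).
    { split; [left; apply Rinv_0_lt_compat; lra|].
      rewrite <- Rinv_1. apply Rinv_le_contravar; lra. }
    pose proof (convex_at n _ x z _ _ _ Hc Ht eq_refl eq_refl) as C. simpl in C.
    apply (Rmult_le_compat_l (1 + m)) in C; [|lra].
    replace ((1 + m) * (/ (1 + m) * - F x + (1 - / (1 + m)) * - F z))
      with (- F x - m * F z) in C by (field; lra).
    lra. }
  destruct (Rtotal_order (F y) (F (vzero n))) as [Hlt|[Heq|Hgt]]; [exfalso | exact Heq | exfalso].
  - (* far out on the ray through [y], concavity would force [F < 0] *)
    set (m := (F y + 1) / (F (vzero n) - F y)).
    assert (Hm : m * (F (vzero n) - F y) = F y + 1) by (unfold m; field; lra).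
    assert (Hmp : 0 < m) by (unfold m; apply Rdiv_lt_0_compat; pose proof (Hpos y); lra).
    pose proof (Hconc (vscal (1 + m) y) (vzero n) m Hmp) as C.
    replace (vadd (vscal (/ (1 + m)) (vscal (1 + m) y)) (vscal (1 - / (1 + m)) (vzero n)))
      with y in C by (apply functional_extensionality; intro i; unfold vadd, vscal, vzero; field; lra).
    pose proof (Hpos (vscal (1 + m) y)). nra.
  - (* far out on the opposite ray, concavity would force [F < 0] *)
    set (m := (F (vzero n) + 1) / (F y - F (vzero n))).
    assert (Hm : m * (F y - F (vzero n)) = F (vzero n) + 1) by (unfold m; field; lra).
    assert (Hmp : 0 < m) by (unfold m; apply Rdiv_lt_0_compat; pose proof (Hpos (vzero n)); lra).
    pose proof (Hconc (vscal (- m) y) y m Hmp) as C.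
    replace (vadd (vscal (/ (1 + m)) (vscal (- m) y)) (vscal (1 - / (1 + m)) y))
      with (vzero n) in C by (apply functional_extensionality; intro i; unfold vadd, vscal, vzero; field; lra).
    pose proof (Hpos (vscal (- m) y)). nra.
Qed.

(** * Transforms satisfying the hypotheses of the theorem *)

Section Transform.

Variables (n : nat) (T : efun n -> efun n).
Hypothesis T_cvx : forall phi, Cvx phi -> Cvx (T phi).
Hypothesis T_order : forall phi psi, Cvx phi -> Cvx psi -> (fle phi psi <-> fle (T phi) (T psi)).
Hypothesis T_homogeneous : forall phi, Cvx phi -> pos_homogeneous phi -> forall x, T phi x = phi x.
Hypothesis T_sum : forall phi' psi', InIm T phi' -> InIm T psi' ->
  (exists x, ERadd (phi' x) (psi' x) <> PInf) -> InIm T (fun x => ERadd (phi' x) (psi' x)).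

Lemma T_fix h : Cvx h -> pos_homogeneous h -> T h = h.
Proof. intros Hc Hh. apply functional_extensionality. intro x. apply T_homogeneous; assumption. Qed.

Lemma homogeneous_minorant h phi : Cvx h -> pos_homogeneous h -> Cvx phi ->
  (fle h phi <-> fle h (T phi)).
Proof. intros Hc Hh Hphi. rewrite (T_order h phi Hc Hphi), T_fix by assumption. reflexivity. Qed.

Lemma image_T phi : Cvx phi -> InIm T (T phi).
Proof. intro H. exists phi. auto. Qed.

Lemma image_lin k : InIm T (lin k).
Proof. exists (lin k). split; [apply Cvx_lin | apply T_fix; [apply Cvx_lin | apply homogeneous_lin]]. Qed.

Lemma T_proper phi : Cvx phi -> exists x r, T phi x = Fin r.
Proof.
  intro H. destruct (T_cvx phi H) as [_ [_ [x Hx]]].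
  destruct (T phi x) eqn:E; [eauto | contradiction].
Qed.

Lemma image_sum phi psi x r : Cvx phi -> InIm T psi -> T phi x = Fin r ->
  (forall y s, T phi y = Fin s -> psi y <> PInf) ->
  InIm T (fun y => ERadd (T phi y) (psi y)).
Proof.
  intros Hphi Hpsi Hx Hdom. apply T_sum; [apply image_T, Hphi | exact Hpsi |].
  exists x. rewrite Hx. specialize (Hdom x r Hx). destruct (psi x); [discriminate | contradiction].
Qed.

Lemma lin_below_Tdelta a c k : fle (lin k) (T (delta a c)) <-> dot n k a <= c.
Proof.
  rewrite <- homogeneous_minorant by (apply Cvx_lin || apply homogeneous_lin || apply Cvx_delta).
  apply fle_delta.
Qed.

Lemma Tdelta_majorant a c chi : Cvx chi -> fle (T (delta a c)) (T chi) ->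
  exists c', c <= c' /\ chi = delta a c'.
Proof.
  intros Hchi H. apply delta_majorant; [exact Hchi|].
  apply (T_order _ _ (Cvx_delta n a c) Hchi), H.
Qed.

(** On its domain, [T (delta a c)] coincides with [c * <k, .>] for every covector [k]
    normalised at [a]: otherwise adding the gap [T (delta a c) - c <k, .>] would
    produce the image of a delta at [a] with a larger value. *)
Lemma Tdelta_linear a k c y r : dot n k a = 1 ->
  T (delta a c) y = Fin r -> r = c * dot n k y.
Proof.
  intros Hk Hy. set (psi := T (delta a c)) in *.
  assert (Hmin : forall y r, psi y = Fin r -> c * dot n k y <= r).
  { intros y0 r0 E. assert (F : fle (lin (vscal c k)) psi)
      by (apply lin_below_Tdelta; rewrite dot_scal_l, Hk; lra).
    specialize (F y0). rewrite E in F. simpl in F. rewrite dot_scal_l in F. exact F. }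
  set (gap := fun y => ERadd (psi y) (lin (vscal (- c) k) y)).
  assert (Igap : InIm T gap)
    by (apply (image_sum _ _ y r (Cvx_delta n a c) (image_lin _) Hy); discriminate).
  destruct (image_sum (delta a c) gap y r (Cvx_delta n a c) Igap Hy) as [chi [Hchi Echi]].
  { intros y0 s E. unfold gap. fold psi in E. rewrite E. discriminate. }
  fold psi in Echi.
  assert (Hup : fle psi (T chi)).
  { rewrite Echi. intro y0. unfold gap. destruct (psi y0) eqn:E; simpl; [|trivial].
    specialize (Hmin y0 r0 E). rewrite dot_scal_l. lra. }
  destruct (Tdelta_majorant a c chi Hchi Hup) as [c' [Hcc' ->]].
  assert (Hmid : fle (lin (vscal ((c + c') / 2) k)) psi).
  { assert (F : fle (lin (vscal c' k)) (T (delta a c')))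
      by (apply lin_below_Tdelta; rewrite dot_scal_l, Hk; lra).
    rewrite Echi in F. intro y0. specialize (F y0). unfold gap in F.
    destruct (psi y0) eqn:E; simpl in *; [|trivial].
    specialize (Hmin y0 r0 E). rewrite !dot_scal_l in *. lra. }
  apply lin_below_Tdelta in Hmid. rewrite dot_scal_l, Hk in Hmid.
  assert (c' = c) as -> by lra.
  apply (f_equal (fun f => f y)) in Echi. fold psi in Echi. unfold gap in Echi.
  rewrite Hy in Echi. simpl in Echi. injection Echi. rewrite dot_scal_l. intro. lra.
Qed.

(** The domain of [T (delta a c)] lies in the half-space [<k, .> >= 0]: compare with the
    homogeneous minorant [max (c <k, .>, (c - 1) <k, .>)]. *)
Lemma Tdelta_dom_nonneg a k c y r : dot n k a = 1 ->
  T (delta a c) y = Fin r -> 0 <= dot n k y.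
Proof.
  intros Hk Hy. pose proof (Tdelta_linear a k c y r Hk Hy) as Er.
  assert (F : fle (lin_max (vscal c k) (vscal (c - 1) k)) (T (delta a c))).
  { apply (homogeneous_minorant _ (delta a c)); [apply Cvx_lin_max | apply homogeneous_lin_max | apply Cvx_delta |].
    apply fle_delta. simpl. rewrite !dot_scal_l, Hk. apply Rmax_lub; lra. }
  specialize (F y). rewrite Hy in F. simpl in F. rewrite !dot_scal_l in F.
  pose proof (Rmax_r (c * dot n k y) ((c - 1) * dot n k y)). lra.
Qed.

(** ... and is not contained in the hyperplane [<k, .> = 0], since otherwise
    [<(c + 1) k, .>] would be a linear minorant of [T (delta a c)]. *)
Lemma Tdelta_dom_positive a k c : dot n k a = 1 ->
  exists y r, T (delta a c) y = Fin r /\ 0 < dot n k y.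
Proof.
  intro Hk. apply NNPP. intro Hno.
  assert (F : fle (lin (vscal (c + 1) k)) (T (delta a c))).
  { intro y. destruct (T (delta a c) y) as [r|] eqn:E; simpl; [|trivial].
    rewrite (Tdelta_linear a k c y r Hk E), dot_scal_l.
    destruct (Tdelta_dom_nonneg a k c y r Hk E) as [Hpos|Hzero].
    - exfalso. apply Hno. eauto.
    - rewrite <- Hzero. lra. }
  apply lin_below_Tdelta in F. rewrite dot_scal_l, Hk in F. lra.
Qed.

Lemma Tdelta_shift a k c t : dot n k a = 1 -> 0 <= t ->
  T (delta a (c + t)) = fun y => ERadd (T (delta a c) y) (lin (vscal t k) y).
Proof.
  intros Hk Ht. destruct (Tdelta_dom_positive a k c Hk) as [y0 [r0 [E0 Hy0]]].
  destruct (image_sum (delta a c) (lin (vscal t k)) y0 r0 (Cvx_delta n a c) (image_lin _) E0)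
    as [chi [Hchi Echi]]; [discriminate|].
  assert (Hup : fle (T (delta a c)) (T chi)).
  { rewrite Echi. intro y. destruct (T (delta a c) y) as [r|] eqn:E; simpl; [|trivial].
    pose proof (Tdelta_dom_nonneg a k c y r Hk E). rewrite dot_scal_l. nra. }
  destruct (Tdelta_majorant a c chi Hchi Hup) as [c' [_ ->]].
  replace (c + t) with c'; [exact Echi|].
  assert (V := f_equal (fun f => f y0) Echi). simpl in V. rewrite E0 in V. simpl in V.
  pose proof (Tdelta_linear a k c' y0 _ Hk V) as E1.
  pose proof (Tdelta_linear a k c y0 _ Hk E0) as E2.
  rewrite dot_scal_l in E1. nra.
Qed.

Lemma Tdelta_dom_indep a k c c' y r : dot n k a = 1 ->
  T (delta a c) y = Fin r -> exists r', T (delta a c') y = Fin r'.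
Proof.
  intros Hk Hy. destruct (Rle_dec c c') as [Hle|Hlt].
  - rewrite <- (Rplus_minus c c'), (Tdelta_shift a k c (c' - c) Hk ltac:(lra)), Hy. simpl. eauto.
  - pose proof (Tdelta_shift a k c' (c - c') Hk ltac:(lra)) as E.
    rewrite Rplus_minus in E. rewrite E in Hy.
    destruct (T (delta a c') y); [eauto | discriminate].
Qed.

(** For [a <> 0], the domain of [T (delta a 1)] lies on the open ray spanned by [a]:
    all covectors normalised at [a] agree there, and the origin is excluded since
    [delta (vzero n) 0] is a fixed point of [T]. *)
Lemma Tdelta_ray a y r : a <> vzero n -> T (delta a 1) y = Fin r ->
  y = vscal (dot n (dual_of a) y) a /\ 0 < dot n (dual_of a) y.
Proof.
  intros Ha Hy. pose proof (dot_dual_of n a Ha) as Hk0.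
  assert (Hval : forall k, dot n k a = 1 -> r = dot n k y).
  { intros k Hk. rewrite (Tdelta_linear a k 1 y r Hk Hy). ring. }
  assert (Hline : y = vscal (dot n (dual_of a) y) a).
  { apply collinear_of_dual_invariant; [exact Ha|].
    intros k Hk. rewrite <- (Hval k Hk), <- (Hval _ Hk0). reflexivity. }
  split; [exact Hline|].
  destruct (Tdelta_dom_nonneg a _ 1 y r Hk0 Hy) as [Hpos|Hzero]; [exact Hpos | exfalso].
  assert (Hy0 : y = vzero n) by (rewrite Hline, <- Hzero; apply functional_extensionality;
                                 intro i; unfold vscal, vzero; ring).
  assert (F : fle (T (delta a 1)) (T (delta (vzero n) 0))).
  { rewrite (T_fix (delta (vzero n) 0)) by (apply Cvx_delta || apply homogeneous_delta_zero).
    apply fle_delta. rewrite <- Hy0, Hy, (Hval _ Hk0), <- Hzero. simpl. lra. }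
  apply (T_order (delta a 1) (delta (vzero n) 0)), fle_delta in F;
    [| apply Cvx_delta | apply Cvx_delta].
  rewrite delta_off in F; [exact F|]. intro E. apply Ha. symmetry. exact E.
Qed.

Lemma T_cst1_nonneg : fle (lin (vzero n)) (T (cst 1)).
Proof.
  apply (homogeneous_minorant _ (cst 1)); [apply Cvx_lin | apply homogeneous_lin | apply Cvx_cst |].
  intro x. unfold lin, cst. simpl. rewrite dot_zero_l. lra.
Qed.

Lemma T_cst1_between a y r : T (delta a 1) y = Fin r ->
  exists s, T (cst 1) y = Fin s /\ 0 <= s <= r.
Proof.
  intro Hy. pose proof (T_cst1_nonneg y) as Hlow.
  assert (Hup : fle (T (cst 1)) (T (delta a 1))).
  { apply (T_order (cst 1) (delta a 1)); [apply Cvx_cst | apply Cvx_delta |].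
    apply fle_delta. simpl. lra. }
  specialize (Hup y). rewrite Hy in Hup.
  destruct (T (cst 1) y) as [s|]; simpl in *; [|contradiction].
  rewrite dot_zero_l in Hlow. eauto.
Qed.

(** On the domain of [T (delta a 1)], [T (cst 1)] coincides with [<k, .>]: the sum
    [T (delta a 1) + T (cst 1)] is the image of some [delta a c'], which forces
    [T (cst 1) = (c' - 1) <k, .>] there, and comparing [cst 1] with [delta a (c'/2)]
    pins down [c' = 2]. *)
Lemma T_cst1_on_dom a k y r : dot n k a = 1 ->
  T (delta a 1) y = Fin r -> T (cst 1) y = Fin (dot n k y).
Proof.
  intros Hk Hy. set (psi := T (delta a 1)) in *. set (f := T (cst 1)).
  destruct (Tdelta_dom_positive a k 1 Hk) as [y0 [r0 [E0 Hy0]]]. fold psi in E0.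
  destruct (image_sum (delta a 1) f y0 r0 (Cvx_delta n a 1) (image_T _ (Cvx_cst n 1)) E0)
    as [chi [Hchi Echi]].
  { intros y1 r1 E1. destruct (T_cst1_between a y1 r1 E1) as [s [Es _]].
    unfold f. rewrite Es. discriminate. }
  fold psi in Echi.
  assert (Hup : fle psi (T chi)).
  { rewrite Echi. intro y1. destruct (psi y1) as [r1|] eqn:E1; simpl; [|trivial].
    destruct (T_cst1_between a y1 r1 E1) as [s [Es [Hs _]]]. fold f in Es. rewrite Es. simpl. lra. }
  destruct (Tdelta_majorant a 1 chi Hchi Hup) as [c' [_ ->]].
  assert (Fval : forall y1 r1, psi y1 = Fin r1 -> f y1 = Fin ((c' - 1) * dot n k y1)).
  { intros y1 r1 E1. destruct (T_cst1_between a y1 r1 E1) as [s [Es _]]. fold f in Es.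
    pose proof (Tdelta_linear a k 1 y1 r1 Hk E1).
    assert (V := f_equal (fun g => g y1) Echi). simpl in V.
    rewrite E1, Es in V. simpl in V.
    pose proof (Tdelta_linear a k c' y1 _ Hk V). rewrite Es. f_equal. nra. }
  assert (Hc'2 : c' <= 2).
  { destruct (T_cst1_between a y0 r0 E0) as [s [Es [_ Hs]]]. fold f in Es.
    rewrite (Fval y0 r0 E0) in Es. injection Es as <-.
    pose proof (Tdelta_linear a k 1 y0 r0 Hk E0). nra. }
  assert (H2c' : 2 <= c').
  { apply Rnot_lt_le. intro Hlt. set (e := c' / 2).
    assert (F : fle f (T (delta a e))).
    { intro y1. destruct (T (delta a e) y1) as [r1|] eqn:E1; simpl; [|destruct (f y1); exact I].
      destruct (Tdelta_dom_indep a k e 1 y1 r1 Hk E1) as [v Ev]. fold psi in Ev.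
      rewrite (Fval y1 v Ev). simpl.
      pose proof (Tdelta_linear a k e y1 r1 Hk E1). pose proof (Tdelta_dom_nonneg a k e y1 r1 Hk E1).
      unfold e in *. nra. }
    apply (T_order (cst 1) (delta a e)), fle_delta in F; [| apply Cvx_cst | apply Cvx_delta].
    simpl in F. unfold e in F. lra. }
  rewrite (Fval y r Hy). f_equal. replace c' with 2 by lra. ring.
Qed.

Lemma T_cst1_on_ray a kap r : a <> vzero n ->
  T (delta a 1) (vscal kap a) = Fin r -> T (cst 1) (vscal kap a) = Fin kap.
Proof.
  intros Ha Hy. rewrite (T_cst1_on_dom a (dual_of a) _ r (dot_dual_of n a Ha) Hy).
  rewrite dot_scal_r, dot_dual_of by exact Ha. f_equal. ring.
Qed.

(** The domain of [T (delta a 1)] meets the ray of [a] in at most one point: two points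
    [k1 a], [k2 a] would make the convex function [T (cst 1)] agree with the coordinate
    at [k1] and [k2], whereas the domain point [k3 a] of [T (delta (2 a) 1)] carries the
    value [k3 / 2]. *)
Lemma Tdelta_dom_single a k1 k2 r1 r2 : a <> vzero n -> k1 < k2 ->
  T (delta a 1) (vscal k1 a) = Fin r1 -> T (delta a 1) (vscal k2 a) = Fin r2 -> False.
Proof.
  intros Ha H12 E1 E2. set (f := T (cst 1)).
  assert (Ha2 : vscal 2 a <> vzero n) by (apply vscal_nonzero; [lra | exact Ha]).
  destruct (T_proper (delta (vscal 2 a) 1) (Cvx_delta _ _ _)) as [y3 [r3 E3]].
  destruct (Tdelta_ray (vscal 2 a) y3 r3 Ha2 E3) as [Ey3 Hpos]. rewrite Ey3 in E3.
  set (kap := dot n (dual_of (vscal 2 a)) y3) in *.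
  assert (F3 : f (vscal (2 * kap) a) = Fin kap).
  { unfold f. rewrite Rmult_comm, <- vscal_vscal. apply (T_cst1_on_ray _ _ r3 Ha2 E3). }
  assert (F1 : f (vscal k1 a) = Fin k1) by apply (T_cst1_on_ray _ _ r1 Ha E1).
  assert (F2 : f (vscal k2 a) = Fin k2) by apply (T_cst1_on_ray _ _ r2 Ha E2).
  destruct (Rlt_le_dec (2 * kap) k1) as [Hout|Hk1]; [|destruct (Rlt_le_dec k2 (2 * kap)) as [Hout|Hk2]].
  1, 2: destruct (T_cvx _ (Cvx_cst n 1)) as [Hfc _];
        pose proof (convex_ray_secant n f a k1 k2 (2 * kap) kap Hfc H12 F1 F2 ltac:(lra) F3); lra.
  destruct (T_cvx _ (Cvx_delta n a 1)) as [Hdc _].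
  destruct (convex_finite_between n _ a k1 k2 (2 * kap) r1 r2 Hdc ltac:(lra) E1 E2) as [v Ev].
  pose proof (T_cst1_on_ray a _ v Ha Ev) as F. fold f in F. rewrite F3 in F.
  injection F. lra.
Qed.

Lemma Tdelta_nonzero a : a <> vzero n ->
  exists lam, 0 < lam /\ forall c, T (delta a c) = delta (vscal lam a) (lam * c).
Proof.
  intro Ha. pose proof (dot_dual_of n a Ha) as Hk0.
  destruct (T_proper (delta a 1) (Cvx_delta _ _ _)) as [ys [rs Es]].
  destruct (Tdelta_ray a ys rs Ha Es) as [Eys Hlam]. rewrite Eys in Es.
  set (lam := dot n (dual_of a) ys) in *.
  exists lam. split; [exact Hlam|]. intro c. apply functional_extensionality. intro y.
  destruct (excluded_middle_informative (y = vscal lam a)) as [->|Hy].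
  - rewrite delta_at. destruct (Tdelta_dom_indep a _ 1 c _ rs Hk0 Es) as [v Ev].
    rewrite Ev, (Tdelta_linear a _ c _ v Hk0 Ev), dot_scal_r, Hk0. f_equal. ring.
  - rewrite delta_off by exact Hy.
    destruct (T (delta a c) y) as [r|] eqn:E; [exfalso | reflexivity].
    destruct (Tdelta_dom_indep a _ c 1 y r Hk0 E) as [v Ev].
    destruct (Tdelta_ray a y v Ha Ev) as [Ey _]. rewrite Ey in Ev, Hy.
    destruct (Rtotal_order (dot n (dual_of a) y) lam) as [C|[C|C]].
    + exact (Tdelta_dom_single a _ _ v rs Ha C Ev Es).
    + apply Hy. rewrite C. reflexivity.
    + exact (Tdelta_dom_single a _ _ rs v Ha C Es Ev).
Qed.

(** Once [T] is known on the deltas at [x], it is known at [lam x] on all of Cvx,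
    because [chi x <= c] iff [chi <= delta x c]. *)
Lemma T_scales_at x lam : 0 < lam ->
  (forall c, T (delta x c) = delta (vscal lam x) (lam * c)) ->
  forall chi, Cvx chi -> T chi (vscal lam x) = ERscal lam (chi x).
Proof.
  intros Hl Hd chi Hc. apply scaled_upper_threshold; [exact Hl|]. intro c.
  rewrite <- !fle_delta, <- Hd. apply T_order; [exact Hc | apply Cvx_delta].
Qed.

Definition ERval (v : ER) : R := match v with Fin s => s | PInf => 0 end.

Variable x0 : Vec n.
Hypothesis x0_nonzero : x0 <> vzero n.

(** [T (cst 1) + T (cst (-1)) = 0]: this sum is [T chi] for some [chi] which vanishes
    off the origin by [T_scales_at], hence everywhere, and [T] fixes [lin (vzero n)]. *)
Lemma T_cst_cancel y : ERadd (T (cst 1) y) (T (cst (-1)) y) = Fin 0.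
Proof.
  assert (Hneg : fle (T (cst (-1))) (lin (vzero n))).
  { rewrite <- (T_fix (lin (vzero n))) by (apply Cvx_lin || apply homogeneous_lin).
    apply (T_order (cst (-1)) (lin (vzero n))); [apply Cvx_cst | apply Cvx_lin |].
    intro x. unfold cst, lin. simpl. rewrite dot_zero_l. lra. }
  destruct (T_proper (cst 1) (Cvx_cst n 1)) as [y1 [r1 E1]].
  destruct (image_sum (cst 1) (T (cst (-1))) y1 r1 (Cvx_cst n 1) (image_T _ (Cvx_cst n (-1))) E1)
    as [chi [Hchi Echi]].
  { intros y2 _ _. specialize (Hneg y2). destruct (T (cst (-1)) y2); [discriminate | contradiction]. }
  assert (Hoff : forall x, x <> vzero n -> chi x = Fin 0).
  { intros x Hx. destruct (Tdelta_nonzero x Hx) as [lam [Hl Hd]].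
    pose proof (T_scales_at x lam Hl Hd chi Hchi) as E. rewrite Echi in E.
    rewrite !(T_scales_at x lam Hl Hd _ (Cvx_cst n _)) in E. unfold cst in E. simpl in E.
    destruct (chi x) as [s|]; [|discriminate]. injection E as E. f_equal. nra. }
  destruct Hchi as [Hconv Hchi].
  assert (Hzero : chi = lin (vzero n)).
  { apply functional_extensionality; intro x. unfold lin. rewrite dot_zero_l.
    destruct (excluded_middle_informative (x = vzero n)) as [->|Hx]; [|apply Hoff, Hx].
    exact (convex_const_off_origin n chi x0 0 Hconv x0_nonzero Hoff). }
  rewrite Hzero, T_fix in Echi by (apply Cvx_lin || apply homogeneous_lin).
  apply (f_equal (fun f => f y)) in Echi. unfold lin in Echi. rewrite dot_zero_l in Echi.
  symmetry. exact Echi.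
Qed.

(** Hence [T (cst 1)] is finite, nonnegative and concave, so it is constant. *)
Lemma T_cst1_constant y : T (cst 1) y = Fin (ERval (T (cst 1) (vzero n))).
Proof.
  set (F := fun x => ERval (T (cst 1) x)).
  assert (Hsplit : forall x, T (cst 1) x = Fin (F x) /\ T (cst (-1)) x = Fin (- F x)).
  { intro x. pose proof (T_cst_cancel x) as E. unfold F.
    destruct (T (cst 1) x), (T (cst (-1)) x); simpl in *; try discriminate.
    injection E as E. split; f_equal; lra. }
  assert (Hpos : forall x, 0 <= F x).
  { intro x. pose proof (T_cst1_nonneg x) as H. rewrite (proj1 (Hsplit x)) in H.
    simpl in H. rewrite dot_zero_l in H. exact H. }
  assert (Hconc : convex (fun x => Fin (- F x))).
  { replace (fun x => Fin (- F x)) with (T (cst (-1))); [apply (T_cvx _ (Cvx_cst n (-1)))|].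
    apply functional_extensionality; intro x. apply Hsplit. }
  rewrite (proj1 (Hsplit y)). f_equal. exact (concave_nonneg_const n F Hpos Hconc y).
Qed.

(** The common scaling factor of [T]: the constant value of [T (cst 1)]. *)
Definition scale : R := ERval (T (cst 1) (vzero n)).

(** All the factors [lam] of [Tdelta_nonzero] equal [scale], as [T (cst 1)] takes the
    value [lam] at [lam x]. *)
Lemma Tdelta_nonzero_scale x : x <> vzero n ->
  0 < scale /\ forall c, T (delta x c) = delta (vscal scale x) (scale * c).
Proof.
  intro Hx. destruct (Tdelta_nonzero x Hx) as [lam [Hl Hd]].
  pose proof (T_scales_at x lam Hl Hd _ (Cvx_cst n 1)) as E.
  rewrite T_cst1_constant in E. simpl in E. injection E as E. fold scale in E.
  replace scale with lam by lra. auto.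
Qed.

Lemma scale_pos : 0 < scale.
Proof. exact (proj1 (Tdelta_nonzero_scale x0 x0_nonzero)). Qed.

Lemma vscal_scale_inv (y : Vec n) : vscal scale (vscal (/ scale) y) = y.
Proof.
  pose proof scale_pos. apply functional_extensionality; intro i. unfold vscal. field. lra.
Qed.

Lemma scale_inv_nonzero (y : Vec n) : y <> vzero n -> vscal (/ scale) y <> vzero n.
Proof. pose proof scale_pos. intro Hy. apply vscal_nonzero; [apply Rinv_neq_0_compat; lra | exact Hy]. Qed.

Lemma T_scaling_off_origin chi y : Cvx chi -> y <> vzero n ->
  T chi y = ERscal scale (chi (vscal (/ scale) y)).
Proof.
  intros Hchi Hy. rewrite <- (vscal_scale_inv y) at 1.
  pose proof (scale_inv_nonzero y Hy) as Hy'.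
  exact (T_scales_at _ scale scale_pos (proj2 (Tdelta_nonzero_scale _ Hy')) chi Hchi).
Qed.

Lemma T_cst e y : T (cst e) y = Fin (scale * e).
Proof.
  assert (Hoff : forall y, y <> vzero n -> T (cst e) y = Fin (scale * e))
    by (intros y' Hy'; rewrite T_scaling_off_origin by (apply Cvx_cst || exact Hy'); reflexivity).
  destruct (excluded_middle_informative (y = vzero n)) as [->|Hy]; [|apply Hoff, Hy].
  destruct (T_cvx _ (Cvx_cst n e)) as [Hconv _].
  exact (convex_const_off_origin n _ x0 _ Hconv x0_nonzero Hoff).
Qed.

(** [T (delta a c) = delta (scale a) (scale c)] for every [a], including the origin,
    where the value is identified by comparison with the constants. *)
Lemma T_delta a c : T (delta a c) = delta (vscal scale a) (scale * c).
Proof.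
  destruct (excluded_middle_informative (a = vzero n)) as [->|Ha];
    [|exact (proj2 (Tdelta_nonzero_scale a Ha) c)].
  rewrite vscal_zero.
  assert (Hoff : forall y, y <> vzero n -> T (delta (vzero n) c) y = PInf).
  { intros y Hy. rewrite T_scaling_off_origin by (apply Cvx_delta || exact Hy).
    rewrite delta_off by (apply scale_inv_nonzero, Hy). reflexivity. }
  destruct (T_proper _ (Cvx_delta n (vzero n) c)) as [y [r Ey]].
  destruct (excluded_middle_informative (y = vzero n)) as [->|Hy];
    [| rewrite Hoff in Ey by exact Hy; discriminate].
  assert (Ed : T (delta (vzero n) c) = delta (vzero n) r).
  { apply functional_extensionality; intro y.
    destruct (excluded_middle_informative (y = vzero n)) as [->|Hy].
    - rewrite delta_at. exact Ey.
    - rewrite delta_off by exact Hy. apply Hoff, Hy. }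
  rewrite Ed. f_equal. apply scaled_lower_threshold; [exact scale_pos|]. intro e.
  pose proof (T_order _ _ (Cvx_cst n e) (Cvx_delta n (vzero n) c)) as E.
  replace (T (cst e)) with (@cst n (scale * e)) in E
    by (apply functional_extensionality; intro y; symmetry; apply T_cst).
  rewrite Ed, !fle_delta in E. exact E.
Qed.

Lemma T_scaling chi x : Cvx chi -> T chi (vscal scale x) = ERscal scale (chi x).
Proof. intro Hchi. exact (T_scales_at x scale scale_pos (T_delta x) chi Hchi). Qed.

End Transform.

(** * Tangency and order are invariant under rescaling *)

Lemma ERle_antisym a b : ERle a b -> ERle b a -> a = b.
Proof. destruct a, b; simpl; try tauto. intros. f_equal. lra. Qed.

Lemma fle_antisym n (f g : efun n) : fle f g -> fle g f -> f = g.
Proof. intros H1 H2. apply functional_extensionality. intro x. apply ERle_antisym; auto. Qed.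

Lemma ERle_scal C a b : 0 < C -> (ERle (ERscal C a) (ERscal C b) <-> ERle a b).
Proof.
  intro HC. destruct a as [x|], b as [y|]; simpl; try tauto.
  split; intro H; [apply (Rmult_le_reg_l C) | apply Rmult_le_compat_l]; lra.
Qed.

Lemma ERscal_add C a e : ERscal C (ERadd a (Fin e)) = ERadd (ERscal C a) (Fin (C * e)).
Proof. destruct a; simpl; [f_equal; ring | reflexivity]. Qed.

Lemma fle_scale n C (f g F G : efun n) : 0 < C ->
  (forall x, F (vscal C x) = ERscal C (f x)) -> (forall x, G (vscal C x) = ERscal C (g x)) ->
  (fle F G <-> fle f g).
Proof.
  intros HC HF HG. split.
  - intros H x. apply (ERle_scal C); [exact HC|]. rewrite <- HF, <- HG. apply H.
  - intros H y. replace y with (vscal C (vscal (/ C) y))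
      by (apply functional_extensionality; intro i; unfold vscal; field; lra).
    rewrite HF, HG. apply ERle_scal; [exact HC | apply H].
Qed.

Lemma tangent_scale n C (f g F G : efun n) : 0 < C ->
  (forall x, F (vscal C x) = ERscal C (f x)) -> (forall x, G (vscal C x) = ERscal C (g x)) ->
  (tangent f g <-> tangent F G).
Proof.
  intros HC HF HG.
  assert (Heps : forall eps, fle (fun x => ERadd (F x) (Fin (C * eps))) G <->
                             fle (fun x => ERadd (f x) (Fin eps)) g).
  { intro eps. apply (fle_scale n C); [exact HC | | exact HG]. intro x. rewrite HF. symmetry. apply ERscal_add. }
  unfold tangent. rewrite (fle_scale n C f g F G HC HF HG). split; intros [Hle Hstrict]; split; auto.
  - intros eps He Hc. apply (Hstrict (eps / C)); [apply Rdiv_lt_0_compat; lra|].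
    apply Heps. replace (C * (eps / C)) with eps by (field; lra). exact Hc.
  - intros eps He Hc. apply (Hstrict (C * eps)); [nra|]. apply Heps, Hc.
Qed.

(** * Dimension zero: functions are determined by their single value *)

Lemma vec0_unique (x y : Vec 0) : x = y.
Proof. apply functional_extensionality. intro i. exact (Fin.case0 (fun i => x i = y i) i). Qed.

Lemma proper_dim0_finite (f : efun 0) : proper f -> forall x, exists r, f x = Fin r.
Proof.
  intros [x0 Hx0] x. rewrite (vec0_unique x x0). destruct (f x0); [eauto | contradiction].
Qed.

Lemma proper_dim0_delta (f : efun 0) : proper f -> exists b d, forall x, f x = delta b d x.
Proof.
  intro Hf. destruct (proper_dim0_finite f Hf (vzero 0)) as [d Ed].
  exists (vzero 0), d. intro x. rewrite (vec0_unique x (vzero 0)), delta_at. exact Ed.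
Qed.

Lemma tangent_dim0 (l phi : efun 0) : (forall x, exists u, l x = Fin u) ->
  (tangent l phi <-> phi = l).
Proof.
  intro Hl. split.
  - intros [Hle Hstrict]. apply fle_antisym; [|exact Hle]. intro x.
    destruct (Hl x) as [u Eu]. specialize (Hle x). rewrite Eu in *.
    destruct (phi x) as [v|] eqn:Ev; simpl in *; [|exfalso].
    + apply Rnot_lt_le. intro Hlt. apply (Hstrict (v - u)); [lra|]. intro y.
      rewrite (vec0_unique y x), Eu, Ev. simpl. lra.
    + apply (Hstrict 1); [lra|]. intro y. rewrite (vec0_unique y x), Ev. destruct (l x); exact I.
  - intros ->. split; [intro x; apply ERle_refl|]. intros eps He Hc.
    destruct (Hl (vzero 0)) as [u Eu]. specialize (Hc (vzero 0)). cbv beta in Hc. rewrite Eu in Hc. simpl in Hc. lra.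
Qed.

Lemma order_embedding_injective n (T : efun n -> efun n)
  (T_order : forall phi psi, Cvx phi -> Cvx psi -> (fle phi psi <-> fle (T phi) (T psi)))
  phi psi : Cvx phi -> Cvx psi -> T phi = T psi -> phi = psi.
Proof.
  intros Hphi Hpsi E. apply fle_antisym.
  - apply (T_order _ _ Hphi Hpsi). rewrite E. intro x. apply ERle_refl.
  - apply (T_order _ _ Hpsi Hphi). rewrite E. intro x. apply ERle_refl.
Qed.

Theorem mainTheorem6 (n : nat) (T : efun n -> efun n)
  (HT : forall phi, Cvx phi -> Cvx (T phi))
  (H1 : forall phi psi, Cvx phi -> Cvx psi -> (fle phi psi <-> fle (T phi) (T psi)))
  (H2 : forall phi, Cvx phi -> pos_homogeneous phi -> forall x, T phi x = phi x)
  (H3 : forall phi' psi', InIm T phi' -> InIm T psi' ->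
          (exists x, ERadd (phi' x) (psi' x) <> PInf) ->
          InIm T (fun x => ERadd (phi' x) (psi' x))) :
  (forall (a : Vec n) (c : R), exists (b : Vec n) (d : R),
      forall x, T (delta a c) x = delta b d x)
  /\
  (forall (l phi : efun n), affine l -> Cvx phi ->
      (tangent l phi <-> tangent (T l) (T phi))).
Proof.
  destruct n as [|m].
  - (* dimension zero: every proper function is a delta, and T is injective *)
    split.
    + intros a c. apply proper_dim0_delta, HT, Cvx_delta.
    + intros l phi Hl Hphi. pose proof (Cvx_affine 0 l Hl) as Hlc.
      assert (Hfin : forall f, Cvx f -> forall x, exists u, f x = Fin u)
        by (intros f [_ [_ Hf]]; exact (proper_dim0_finite f Hf)).
      rewrite (tangent_dim0 l phi (Hfin l Hlc)), (tangent_dim0 _ _ (Hfin _ (HT l Hlc))).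
      split; [intros -> | apply (order_embedding_injective 0 T H1 phi l Hphi Hlc)]; reflexivity.
  - (* positive dimension: T is the rescaling by [scale] *)
    set (x0 := (fun _ => 1) : Vec (S m)).
    assert (Hx0 : x0 <> vzero (S m)).
    { intro E. apply (f_equal (fun f => f Fin.F1)) in E. unfold x0, vzero in E. lra. }
    pose proof (scale_pos _ T HT H1 H2 H3 x0 Hx0) as HC.
    split.
    + intros a c. exists (vscal (scale _ T) a), (scale _ T * c). intro x.
      rewrite (T_delta _ T HT H1 H2 H3 x0 Hx0). reflexivity.
    + intros l phi Hl Hphi. pose proof (Cvx_affine _ l Hl) as Hlc.
      apply (tangent_scale _ (scale _ T)); [exact HC | |];
        intro x; apply (T_scaling _ T HT H1 H2 H3 x0 Hx0); assumption.
Qed.
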